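(* Let $f$ be a positive Boolean function on $B^n$ and let $S$ be a nonempty set of $k$ relevant variables of $f$. Then there exist at least $k+1$ extremal points of $f$ corresponding to $S$.
   Context: $B=\{0,1\}$; $\mathbf{x}\preceq\mathbf{y}$ means $(\mathbf{x})_i=1\Rightarrow(\mathbf{y})_i=1$ for all $i$. $f$ is positive if $f(\mathbf{x})=1$ and $\mathbf{x}\preceq\mathbf{y}$ imply $f(\mathbf{y})=1$. Maximal zeros (resp. minimal ones) are $\preceq$-maximal false points (resp. $\preceq$-minimal true points); extremal points are maximal zeros and minimal ones. A variable $x_i$ is relevant if $f_{|x_i=0}\not\equiv f_{|x_i=1}$. A maximal zero $\mathbf{y}$ corresponds to $x_i$ if $(\mathbf{y})_i=0$; a minimal one $\mathbf{y}$ corresponds to $x_i$ if $(\mathbf{y})_i=1$. An extremal point corresponds to a set $S$ of variables if it corresponds to at least one variable in $S$. *)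

From mathcomp Require Import all_boot.
Set Implicit Arguments. Unset Strict Implicit. Unset Printing Implicit Defensive.

Definition point (n : nat) := {ffun 'I_n -> bool}.

Definition preceq n (x y : point n) : bool := [forall i, x i ==> y i].

Definition positive n (f : point n -> bool) : Prop :=
  forall x y : point n, f x -> preceq x y -> f y.

Definition setc n (x : point n) (i : 'I_n) (b : bool) : point n :=
  [ffun j => if j == i then b else x j].

Definition restrict n (f : point n -> bool) (i : 'I_n) (b : bool) : point n -> bool :=
  fun x => f (setc x i b).

Definition relevant n (f : point n -> bool) (i : 'I_n) : Prop :=
  exists x : point n, restrict f i false x <> restrict f i true x.

Definition maximal_zero n (f : point n -> bool) (y : point n) : bool :=
  ~~ f y && [forall z : point n, (preceq y z && ~~ f z) ==> (z == y)].
Definition minimal_one n (f : point n -> bool) (y : point n) : bool :=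
  f y && [forall z : point n, (preceq z y && f z) ==> (z == y)].
Definition extremal n (f : point n -> bool) (y : point n) : bool :=
  maximal_zero f y || minimal_one f y.

Definition corresponds_var n (f : point n -> bool) (y : point n) (i : 'I_n) : bool :=
  (maximal_zero f y && ~~ y i) || (minimal_one f y && y i).
Definition corresponds_set n (f : point n -> bool) (y : point n) (S : {set 'I_n}) : bool :=
  [exists i in S, corresponds_var f y i].

From mathcomp Require Import all_boot perm.
Set Implicit Arguments. Unset Strict Implicit. Unset Printing Implicit Defensive.

(* Induction on |S|.  Choose i in S and b such that every other variable of S
   stays relevant in f_{|x_i=b}.  Such a choice exists: take i in S with the
   fewest true points having x_i = 1.  If x_j were irrelevant in f_{|x_i=1} and
   x_l in f_{|x_i=0}, then exchanging x_i and x_j (resp. x_l) would send true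
   points to true points, so by minimality f would be symmetric in x_i, x_j and
   in x_i, x_l; with the two irrelevances this makes x_i irrelevant in f.
   Each extremal point p of f_{|x_i=b} lifts injectively to an extremal point
   of f corresponding to the same variables (p or p with x_i := b, whichever
   takes the value f_{|x_i=b}(p)), and an extremal point of f corresponding to
   x_i with value ~~ b is not such a lift. *)

Section Order.
Variable n : nat.
Implicit Types (x y z : point n) (f : point n -> bool).

Lemma preceqP x y : reflect (forall k, x k -> y k) (preceq x y).
Proof. by apply: (iffP forallP) => H k; [apply/implyP | apply/implyP/H]. Qed.

Lemma preceq_refl x : preceq x x.
Proof. by apply/preceqP. Qed.

Lemma preceq_trans x y z : preceq x y -> preceq y z -> preceq x z.
Proof. by move=> /preceqP xy /preceqP yz; apply/preceqP => k /xy /yz. Qed.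

Definition weight x := #|[set k | x k]|.

Lemma preceq_subset x y : preceq x y -> [set k | x k] \subset [set k | y k].
Proof. by move=> /preceqP xy; apply/subsetP => k; rewrite !inE => /xy. Qed.

Lemma preceq_weight_eq x y : preceq x y -> weight y <= weight x -> x = y.
Proof.
move=> xy yx; have /eqP/setP E: [set k | x k] == [set k | y k].
  by rewrite eqEcard preceq_subset.
by apply/ffunP => k; have := E k; rewrite !inE.
Qed.

Lemma minimal_oneP f y :
  reflect (f y /\ forall z, preceq z y -> f z -> z = y) (minimal_one f y).
Proof.
apply: (iffP andP) => -[fy min]; split=> //.
  by move=> z zy fz; apply/eqP; move/forallP/(_ z)/implyP: min; apply; rewrite zy.
by apply/forallP => z; apply/implyP => /andP[zy fz]; rewrite (min z).
Qed.

Lemma maximal_zeroP f y :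
  reflect (~~ f y /\ forall z, preceq y z -> ~~ f z -> z = y) (maximal_zero f y).
Proof.
apply: (iffP andP) => -[fy max]; split=> //.
  by move=> z yz fz; apply/eqP; move/forallP/(_ z)/implyP: max; apply; rewrite yz.
by apply/forallP => z; apply/implyP => /andP[yz fz]; rewrite (max z).
Qed.

Lemma minimal_one_below f x : f x -> exists2 y, minimal_one f y & preceq y x.
Proof.
move=> fx; have Px : [pred z | preceq z x && f z] x by rewrite /= preceq_refl.
case: (arg_minnP weight Px) => y /andP[yx fy] min.
exists y => //; apply/minimal_oneP; split=> // z zy fz.
by apply: (preceq_weight_eq zy); apply: min; rewrite /= fz (preceq_trans zy yx).
Qed.

Lemma maximal_zero_above f x : ~~ f x -> exists2 y, maximal_zero f y & preceq x y.
Proof.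
move=> fx; have Px : [pred z | preceq x z && ~~ f z] x by rewrite /= preceq_refl.
case: (arg_maxnP weight Px) => y /andP[xy fy] max.
exists y => //; apply/maximal_zeroP; split=> // z yz fz.
by apply/esym/(preceq_weight_eq yz); apply: max; rewrite /= fz (preceq_trans xy yz).
Qed.

End Order.

Section Coordinates.
Variable n : nat.
Implicit Types (x y z : point n) (f : point n -> bool).

Lemma setcE x i b k : setc x i b k = if k == i then b else x k.
Proof. by rewrite ffunE. Qed.

Lemma setc_at x i b : setc x i b i = b.
Proof. by rewrite setcE eqxx. Qed.

Lemma setc_unchanged x i b : x i = b -> setc x i b = x.
Proof. by move=> <-; apply/ffunP => k; rewrite setcE; case: eqP => // ->. Qed.

Lemma setc_setc x i a b : setc (setc x i a) i b = setc x i b.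
Proof. by apply/ffunP => k; rewrite !setcE; case: eqP. Qed.

Lemma preceq_setc x y i b : preceq x y -> preceq (setc x i b) (setc y i b).
Proof. by move=> /preceqP xy; apply/preceqP => k; rewrite !setcE; case: eqP => // _ /xy. Qed.

Lemma setc_false_preceq x i : preceq (setc x i false) x.
Proof. by apply/preceqP => k; rewrite setcE; case: eqP. Qed.

Lemma preceq_setc_true x i : preceq x (setc x i true).
Proof. by apply/preceqP => k; rewrite setcE; case: eqP. Qed.

Lemma setc_false_preceq_true x i : preceq (setc x i false) (setc x i true).
Proof. by apply/preceqP => k; rewrite !setcE; case: eqP. Qed.

Lemma preceq_setc_coord x y i : preceq x y -> preceq x (setc x i (y i)).
Proof.
by move/preceqP => xy; apply/preceqP => k; rewrite setcE; case: eqP => [->|//]; apply: xy.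
Qed.

Lemma setc_coord_preceq x y i : preceq y x -> preceq (setc x i (y i)) x.
Proof.
by move/preceqP => yx; apply/preceqP => k; rewrite setcE; case: eqP => [->|//]; apply: yx.
Qed.

Lemma restrict_setc f i b x c : restrict f i b (setc x i c) = restrict f i b x.
Proof. by rewrite /restrict setc_setc. Qed.

Lemma positive_restrict f i b : positive f -> positive (restrict f i b).
Proof. by move=> fp x y fx /(preceq_setc i b); apply: fp. Qed.

Lemma minimal_one_restrict_coord f i b p :
  minimal_one (restrict f i b) p -> p i = false.
Proof.
case/minimal_oneP => gp min.
have <- := min _ (setc_false_preceq p i); first exact: setc_at.
by rewrite restrict_setc.
Qed.

Lemma maximal_zero_restrict_coord f i b p :
  maximal_zero (restrict f i b) p -> p i = true.
Proof.
case/maximal_zeroP => gp max.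
have <- := max _ (preceq_setc_true p i); first exact: setc_at.
by rewrite restrict_setc.
Qed.

Definition relevantb f i := [exists x, f (setc x i false) != f (setc x i true)].

Lemma relevantP f i : reflect (relevant f i) (relevantb f i).
Proof. by apply: (iffP existsP) => -[x /eqP]; exists x. Qed.

End Coordinates.

Definition extremal_for n (f : point n -> bool) (S : {set 'I_n}) :=
  [set y | extremal f y && corresponds_set f y S].

Section Relevance.
Variables (n : nat) (f : point n -> bool) (i : 'I_n).
Hypothesis fp : positive f.

Lemma corresponds_var_extremal y : corresponds_var f y i -> extremal f y.
Proof. by case/orP => /andP[ext _]; rewrite /extremal ext ?orbT. Qed.

Lemma corresponds_var_coord y : corresponds_var f y i -> y i = f y.
Proof. by case/orP => /andP[/andP[fy _] yi]; move: fy yi; case: (f y); case: (y i). Qed.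

Lemma mem_extremal_for (S : {set 'I_n}) y :
  i \in S -> corresponds_var f y i -> y \in extremal_for f S.
Proof.
move=> iS yi; rewrite inE corresponds_var_extremal //.
by apply/existsP; exists i; rewrite iS.
Qed.

Lemma relevant_witness : relevant f i ->
  exists x, ~~ f (setc x i false) && f (setc x i true).
Proof.
move=> /relevantP/existsP[x fx]; exists x; move: fx.
have : f (setc x i false) -> f (setc x i true).
  by move=> f0; apply: fp f0 (setc_false_preceq_true x i).
by case: (f (setc x i false)); case: (f (setc x i true)).
Qed.

Lemma relevant_corresponding b : relevant f i ->
  exists2 q, corresponds_var f q i & f q = b.
Proof.
case/relevant_witness => x /andP[f0 f1]; case: b.
  have [q minq qx] := minimal_one_below f1.
  exists q; last by case/andP: minq.
  apply/orP; right; rewrite minq /=; apply: contraT => /negbTE qi.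
  case/minimal_oneP: minq => fq _; case/negP: f0; apply: fp fq _.
  by rewrite -(setc_unchanged qi) -(setc_setc x i true); apply: preceq_setc.
have [q maxq xq] := maximal_zero_above f0.
exists q; last by case/andP: maxq => /negbTE.
apply/orP; left; rewrite maxq /=; apply: contraT; rewrite negbK => qi.
case/maximal_zeroP: maxq => /negP[]; apply: fp f1 _.
by rewrite -(setc_unchanged qi) -(setc_setc x i false); apply: preceq_setc.
Qed.

Lemma one_lt_card_extremal_for (S : {set 'I_n}) :
  i \in S -> relevant f i -> 1 < #|extremal_for f S|.
Proof.
move=> iS reli.
have [q0 q0i fq0] := relevant_corresponding false reli.
have [q1 q1i fq1] := relevant_corresponding true reli.
have q01 : q0 != q1 by apply: contra_eqN fq1 => /eqP <-; rewrite fq0.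
have sub : [set q0; q1] \subset extremal_for f S.
  by apply/subsetP => q; rewrite in_set2 => /orP[]/eqP->; apply: mem_extremal_for.
by apply: leq_trans (subset_leq_card sub); rewrite cards2 q01.
Qed.
End Relevance.

Section Lift.
Variables (n : nat) (f : point n -> bool) (i : 'I_n) (b : bool).
Hypothesis fp : positive f.
Local Notation g := (restrict f i b).
Implicit Types (p z : point n).

Definition lift_point (p : point n) := if f p == g p then p else setc p i b.

Lemma f_lift_point p : f (lift_point p) = g p.
Proof. by rewrite /lift_point; case: eqP. Qed.

Lemma lift_point_coord p k : k != i -> lift_point p k = p k.
Proof. by move=> ki; rewrite /lift_point; case: eqP; rewrite // setcE (negbTE ki). Qed.

Lemma setc_lift_point p c : setc (lift_point p) i c = setc p i c.
Proof. by rewrite /lift_point; case: eqP; rewrite // setc_setc. Qed.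

Lemma lift_point_agree p z : (forall k, k != i -> z k = p k) ->
  z i = lift_point p i -> z = lift_point p.
Proof.
move=> zp zi; apply/ffunP => k.
by case: (eqVneq k i) => [->|ki] //; rewrite lift_point_coord // zp.
Qed.

Lemma minimal_one_lift p : minimal_one g p -> minimal_one f (lift_point p).
Proof.
move=> minp; have pi := minimal_one_restrict_coord minp.
case/minimal_oneP: minp => gp minp.
apply/minimal_oneP; rewrite f_lift_point; split=> // z zq fz.
have lift_le : preceq (lift_point p) (setc p i b).
  rewrite /lift_point; case: eqP => _; last exact: preceq_refl.
  by apply/preceqP => k; rewrite setcE; case: eqP => [->|//]; rewrite pi.
have gz : g z.
  apply: fp fz _; rewrite -[b in setc z i b](setc_at p i b).
  exact/preceq_setc_coord/(preceq_trans zq).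
have zp : setc z i false = p.
  apply: minp; last by rewrite restrict_setc.
  by rewrite -(setc_unchanged pi) -(setc_lift_point p); apply: preceq_setc.
apply: lift_point_agree => [k ki|]; first by rewrite -zp setcE (negbTE ki).
case Ez: (z i); first by move/preceqP: zq => /(_ i); rewrite Ez => ->.
have fpg : f p = g p by rewrite gp -zp setc_unchanged.
by rewrite /lift_point fpg eqxx pi.
Qed.

Lemma maximal_zero_lift p : maximal_zero g p -> maximal_zero f (lift_point p).
Proof.
move=> maxp; have pi := maximal_zero_restrict_coord maxp.
case/maximal_zeroP: maxp => gp maxp.
apply/maximal_zeroP; rewrite f_lift_point; split=> // z qz fz.
have lift_ge : preceq (setc p i b) (lift_point p).
  rewrite /lift_point; case: eqP => _; last exact: preceq_refl.
  by apply/preceqP => k; rewrite setcE; case: eqP => [->|//]; rewrite pi.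
have gz : ~~ g z.
  apply: contra fz => gz; apply: fp gz _.
  rewrite -[b in setc z i b](setc_at p i b).
  exact/setc_coord_preceq/(preceq_trans lift_ge).
have zp : setc z i true = p.
  apply: maxp; last by rewrite restrict_setc.
  by rewrite -(setc_unchanged pi) -(setc_lift_point p); apply: preceq_setc.
apply: lift_point_agree => [k ki|]; first by rewrite -zp setcE (negbTE ki).
case Ez: (z i).
  have fpg : f p = g p by rewrite (negbTE gp) -zp setc_unchanged // (negbTE fz).
  by rewrite /lift_point fpg eqxx pi.
by move/preceqP: qz => /(_ i); rewrite Ez; case: (lift_point p i) => // ->.
Qed.

Lemma extremal_restrict_coord p : extremal g p -> p i = ~~ g p.
Proof.
case/orP => ext.
  by rewrite (maximal_zero_restrict_coord ext); case/andP: ext => /negbTE ->.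
by rewrite (minimal_one_restrict_coord ext); case/andP: ext => ->.
Qed.

Lemma lift_pointK p : extremal g p -> setc (lift_point p) i (~~ f (lift_point p)) = p.
Proof.
move=> ext; rewrite setc_lift_point f_lift_point.
by rewrite -extremal_restrict_coord // setc_unchanged.
Qed.

Lemma corresponds_var_lift p j : j != i ->
  corresponds_var g p j -> corresponds_var f (lift_point p) j.
Proof.
move=> ji; rewrite /corresponds_var lift_point_coord //.
by case/orP => /andP[ext ->]; rewrite ?(maximal_zero_lift ext) ?(minimal_one_lift ext) ?orbT.
Qed.

Lemma card_extremal_for_restrict (S : {set 'I_n}) : i \in S -> relevant f i ->
  #|extremal_for g (S :\ i)| < #|extremal_for f S|.
Proof.
move=> iS reli.
have lift_inj : {in extremal_for g (S :\ i) &, injective lift_point}.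
  move=> p q; rewrite !inE => /andP[extp _] /andP[extq _] pq.
  by rewrite -(lift_pointK extp) -(lift_pointK extq) pq.
rewrite -(card_in_imset lift_inj); apply: proper_card; apply/properP; split.
  apply/subsetP => _ /imsetP[p + ->]; rewrite [p \in _]inE => /andP[_ /existsP[j]].
  rewrite in_setD1 -andbA => /and3P[ji jS pj].
  by apply: mem_extremal_for jS _; apply: corresponds_var_lift.
have [q qi fq] := relevant_corresponding fp (~~ b) reli.
exists q; first exact: mem_extremal_for iS qi.
apply/imsetP => -[p]; rewrite inE => /andP[ext _] qp.
have pi : p i = b by rewrite extremal_restrict_coord // -f_lift_point -qp fq negbK.
move: (corresponds_var_coord qi); rewrite fq qp /lift_point.
by case: eqP => _; rewrite ?setc_at ?pi; case: b.
Qed.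

End Lift.

Definition swap n (i j : 'I_n) (x : point n) : point n := [ffun k => x (tperm i j k)].

Ltac pointwise :=
  let k := fresh "k" in
  apply/ffunP => k; rewrite ?ffunE ?setcE;
  try (case: tpermP => [->|->|? ?]);
  repeat (case: ifP => /eqP ?; subst) => //;
  match goal with
  | H : ?a <> ?a |- _ => by case: H
  | H : is_true (?a != ?a) |- _ => by rewrite eqxx in H
  end.

Section Swap.
Variable n : nat.
Implicit Types (i j : 'I_n) (x : point n).

Lemma swapK i j : involutive (swap i j).
Proof. by move=> x; apply/ffunP => k; rewrite !ffunE tpermK. Qed.

Lemma swap_id i j x : x i = x j -> swap i j x = x.
Proof. by move=> xij; apply/ffunP => k; rewrite ffunE; case: tpermP => [->|->|]. Qed.

Lemma swap_setc i j x : i != j -> x i = false -> x j = true ->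
  swap i j x = setc (setc x j false) i true.
Proof. by move=> ij xi xj; pointwise. Qed.

End Swap.

Lemma not_relevant_setc n (h : point n -> bool) j :
  ~ relevant h j -> forall y c, h (setc y j c) = h y.
Proof.
move=> irr y c.
have inert : h (setc y j false) = h (setc y j true).
  by case: (h (setc y j false) =P h (setc y j true)) => // ne; case: irr; exists y.
by rewrite -[in RHS](setc_unchanged (erefl (y j))); case: c; case: (y j).
Qed.

Section Choice.
Variables (n : nat) (f : point n -> bool).
Hypothesis fp : positive f.
Implicit Types (i j l : 'I_n) (x y : point n).

Definition true_count j := #|[set x | f x && x j]|.

Lemma swap_invariant i j :
  (forall x, f x -> x i = false -> x j = true -> f (swap i j x)) ->
  true_count i <= true_count j -> forall x, f (swap i j x) = f x.
Proof.
move=> swap_true le_ij.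
have sub : swap i j @: [set x | f x && x j] \subset [set x | f x && x i].
  apply/subsetP => _ /imsetP[x /[!inE] /andP[fx xj] ->].
  rewrite ffunE tpermL xj andbT.
  by case xi: (x i); [rewrite swap_id ?xi | apply: swap_true].
have /eqP im : swap i j @: [set x | f x && x j] == [set x | f x && x i].
  by rewrite eqEcard sub card_imset //; apply: can_inj (swapK i j).
have mono x : f x -> f (swap i j x).
  move=> fx; case xi: (x i); case xj: (x j).
  - by rewrite swap_id ?xi ?xj.
  - have : x \in [set x | f x && x i] by rewrite inE fx xi.
    by rewrite -im => /imsetP[y /[!inE] /andP[fy _] ->]; rewrite swapK.
  - exact: swap_true.
  - by rewrite swap_id ?xi ?xj.
by move=> x; apply/idP/idP => [/mono|/mono //]; rewrite swapK.
Qed.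

Lemma swap_true_of_not_relevant i j b : i != j -> ~ relevant (restrict f i b) j ->
  forall x, f x -> x i = false -> x j = true -> f (swap i j x).
Proof.
move=> ij irr x fx xi xj; rewrite swap_setc //.
have := not_relevant_setc irr x false; rewrite /restrict; case: b {irr} => inert.
  by rewrite inert; apply: fp fx (preceq_setc_true x i).
by apply: fp (setc_false_preceq_true _ i); rewrite inert setc_unchanged.
Qed.

Lemma not_relevant_of_restrictions i j : i != j ->
  ~ relevant (restrict f i true) j -> ~ relevant (restrict f i false) j ->
  ~ relevant f j.
Proof.
move=> ij irr1 irr0 [x]; apply.
have e c : setc x j c = setc (setc x j c) i (x i).
  by rewrite [RHS]setc_unchanged // setcE (negbTE ij).
have := not_relevant_setc irr1 x; have := not_relevant_setc irr0 x.
rewrite /restrict => e0 e1.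
by rewrite (e false) (e true); case: (x i); rewrite ?e0 ?e1.
Qed.

Lemma not_relevant_of_symmetries i j l : i != j -> i != l -> j != l ->
  ~ relevant (restrict f i true) j -> ~ relevant (restrict f i false) l ->
  (forall x, f (swap i j x) = f x) -> (forall x, f (swap i l x) = f x) ->
  ~ relevant f i.
Proof.
move=> ij il jl irr_j irr_l sij sil [x]; apply; rewrite /restrict.
pose P a c d : point n :=
  [ffun k => if k == i then a else if k == j then c else if k == l then d else x k].
have setc_Pi a c d a' : setc (P a c d) i a' = P a' c d by rewrite /P; pointwise.
have setc_Pj a c d c' : setc (P a c d) j c' = P a c' d by rewrite /P; pointwise.
have setc_Pl a c d d' : setc (P a c d) l d' = P a c d' by rewrite /P; pointwise.
have swap_Pij a c d : swap i j (P a c d) = P c a d by rewrite /P; pointwise.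
have swap_Pil a c d : swap i l (P a c d) = P d c a by rewrite /P; pointwise.
have setc_x a : setc x i a = P a (x j) (x l) by rewrite /P; pointwise.
pose F a c d := f (P a c d).
have inert_j d : F true false d = F true true d.
  by have := not_relevant_setc irr_j (P true true d) false; rewrite /restrict setc_Pj !setc_Pi.
have inert_l c : F false c false = F false c true.
  by have := not_relevant_setc irr_l (P false c true) false; rewrite /restrict setc_Pl !setc_Pi.
have sym_ij a c d : F a c d = F c a d by rewrite /F -sij swap_Pij.
have sym_il a c d : F a c d = F d c a by rewrite /F -sil swap_Pil.
have inert_i0 c : F false c false = F true c false by rewrite (sym_il true) inert_l.
(* F001 = F000 = F100 = F110 = F010 = F011 = F101 *)
have inert_i_j0_l1 : F false false true = F true false true.
  by rewrite -inert_l inert_i0 inert_j -inert_i0 inert_l (sym_ij false).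
suff inert_i c d : F false c d = F true c d by rewrite !setc_x; apply: inert_i.
case: c; case: d.
- by rewrite -inert_j (sym_ij false).
- exact: inert_i0.
- exact: inert_i_j0_l1.
- exact: inert_i0.
Qed.

Lemma exists_restriction_keeping_relevance (S : {set 'I_n}) :
  S != set0 -> (forall j, j \in S -> relevant f j) ->
  exists2 i, i \in S & exists b, forall j, j \in S :\ i -> relevant (restrict f i b) j.
Proof.
case/set0Pn => i0 i0S rel; have [i iS min] := arg_minnP true_count i0S.
exists i => //.
have [j /andP[/setD1P[ji jS] /(elimN (relevantP _ _)) irr_j] | rel1] :=
  pickP (fun j => (j \in S :\ i) && ~~ relevantb (restrict f i true) j); last first.
  by exists true => j jSi; apply/relevantP; move/negbT: (rel1 j); rewrite jSi negbK.
have [l /andP[/setD1P[li lS] /(elimN (relevantP _ _)) irr_l] | rel0] :=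
  pickP (fun l => (l \in S :\ i) && ~~ relevantb (restrict f i false) l); last first.
  by exists false => l lSi; apply/relevantP; move/negbT: (rel0 l); rewrite lSi negbK.
have ij : i != j by rewrite eq_sym.
have il : i != l by rewrite eq_sym.
have jl : j != l.
  apply/eqP => ejl; rewrite -ejl in irr_l.
  exact: not_relevant_of_restrictions ij irr_j irr_l (rel j jS).
have sij := swap_invariant (swap_true_of_not_relevant ij irr_j) (min j jS).
have sil := swap_invariant (swap_true_of_not_relevant il irr_l) (min l lS).
by case: (not_relevant_of_symmetries ij il jl irr_j irr_l sij sil (rel i iS)).
Qed.
End Choice.

Lemma card_extremal_for_gt n (f : point n -> bool) (S : {set 'I_n}) :
  positive f -> S != set0 -> (forall i, i \in S -> relevant f i) ->
  #|S| < #|extremal_for f S|.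
Proof.
move cS: #|S| => k; elim: k f S cS => [|k IH] f S cS fp S0 rel.
  by move: S0; rewrite -cards_eq0 cS.
have [i iS [b relb]] := exists_restriction_keeping_relevance fp S0 rel.
have cSi : #|S :\ i| = k by move: cS; rewrite (cardsD1 i S) iS => -[].
have [Si0|Si] := eqVneq (S :\ i) set0.
  move: cSi; rewrite Si0 cards0 => <-.
  exact: (one_lt_card_extremal_for fp iS (rel i iS)).
apply: leq_ltn_trans (card_extremal_for_restrict b fp iS (rel i iS)).
exact: IH _ _ cSi (positive_restrict fp) Si relb.
Qed.

Theorem mainTheorem2 (n : nat) (f : point n -> bool) (S : {set 'I_n}) (k : nat) :
  positive f ->
  S != set0 ->
  #|S| = k ->
  (forall i, i \in S -> relevant f i) ->
  k.+1 <= #|[set y : point n | extremal f y && corresponds_set f y S]|.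
Proof. by move=> fp S0 <- rel; apply: card_extremal_for_gt. Qed.
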